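(* Let $\mathcal{T}=(V,\mathsf{p})$ be a directed forest with leafless support $\mathring{\mathcal{T}}=(V,\mathring{\mathsf{p}})$. If $v\in V\setminus\mathrm{root}(\mathring{\mathcal{T}})$, then $\mathring{\mathsf{p}}^n(v)=\mathsf{p}^n(v)$ for all $n\in\{0,1,2,\dots\}$. Consequently, if two vertices $v_1,v_2\in V\setminus\mathrm{root}(\mathring{\mathcal{T}})$ belong to the same tree of $\mathcal{T}$, then they belong to the same tree of $\mathring{\mathcal{T}}$. In particular, if $\mathcal{T}$ is a directed tree, then $\mathring{\mathcal{T}}$ contains at most one non-degenerate tree.
   Context: A directed forest is a pair $\mathcal{T}=(V,\mathsf{p})$ where $V$ is a nonempty set and $\mathsf{p}\colon V\to V$ satisfies: if $n\in\mathbb{N}$, $v\in V$ and $\mathsf{p}^n(v)=v$, then $\mathsf{p}(v)=v$. Roots: $\mathrm{root}(\mathcal{T})=\{v:\mathsf{p}(v)=v\}$. The forest is leafless if $\mathsf{p}(V)=V$. The trees of $\mathcal{T}$ are the connected components of the graph on $V$ with edges $\{\mathsf{p}(u),u\}$, $u\notin\mathrm{root}(\mathcal{T})$ (equivalently, classes of $u\sim w$ iff $\mathsf{p}^m(u)=\mathsf{p}^n(w)$ for some $m,n\ge0$); a tree $W$ is degenerate if $W$ is a single vertex; a directed tree is a directed forest with exactly one tree. $(V,\mathsf{p}_1)$ is thinner than $(V,\mathsf{p}_2)$ if $\mathsf{p}_1(v)\in\{v,\mathsf{p}_2(v)\}$ for all $v$. The leafless support $\mathring{\mathcal{T}}$ is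 the greatest (thickest) leafless directed forest on $V$ thinner than $\mathcal{T}$; it exists. *)

From Stdlib Require Import PeanoNat.

Definition piter {V : Type} (p : V -> V) (n : nat) (v : V) : V := Nat.iter n p v.

Definition directed_forest (V : Type) (p : V -> V) : Prop :=
  inhabited V /\ (forall (n : nat) (v : V), piter p (S n) v = v -> p v = v).

Definition is_root {V : Type} (p : V -> V) (v : V) : Prop := p v = v.

Definition leafless {V : Type} (p : V -> V) : Prop := forall v : V, exists u : V, p u = v.

Definition thinner {V : Type} (p1 p2 : V -> V) : Prop :=
  forall v : V, p1 v = v \/ p1 v = p2 v.

Definition same_tree {V : Type} (p : V -> V) (u w : V) : Prop :=
  exists m n : nat, piter p m u = piter p n w.

Definition directed_tree (V : Type) (p : V -> V) : Prop :=
  directed_forest V p /\ (forall u w : V, same_tree p u w).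

Definition in_nondegenerate_tree {V : Type} (p : V -> V) (v : V) : Prop :=
  exists u : V, u <> v /\ same_tree p u v.

Definition leafless_support {V : Type} (p q : V -> V) : Prop :=
  directed_forest V q /\ leafless q /\ thinner q p /\
  (forall r : V -> V, directed_forest V r -> leafless r -> thinner r p -> thinner r q).

(* Maximality of the leafless support q forces every q-root w that has a
   q-preimage v <> w to be a p-root: otherwise redirecting w to p w gives a
   leafless map, thinner than p and strictly thicker than q at w, which is again
   a directed forest because any map thinner than a directed forest is one (an
   iterate that is not a root was reached by p-steps only, so a cycle through a
   non-root would be a p-cycle).  Hence q = p at every vertex of the q-orbit of a
   non-root, and the q- and p-orbits of non-roots coincide. *)

From Stdlib Require Import Classical ClassicalEpsilon PeanoNat.

Section Iterates.
Context {V : Type}.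

Lemma piter_add (f : V -> V) m n v : piter f (m + n) v = piter f m (piter f n v).
Proof. apply Nat.iter_add. Qed.

Lemma piter_root (f : V -> V) n v : is_root f v -> piter f n v = v.
Proof.
  intro Rv; induction n as [|n IH]; [reflexivity|].
  change (f (piter f n v) = v); now rewrite IH.
Qed.

Lemma piter_thinner (r p : V -> V) n v :
  thinner r p -> ~ is_root r (piter r n v) -> piter r n v = piter p n v.
Proof.
  intros Hrp; induction n as [|n IH]; intro Nn; [reflexivity|].
  change (~ is_root r (r (piter r n v))) in Nn.
  assert (Nprev : ~ is_root r (piter r n v)) by (intro Rx; apply Nn; now rewrite Rx).
  change (r (piter r n v) = p (piter p n v)); rewrite <- (IH Nprev).
  destruct (Hrp (piter r n v)); tauto.
Qed.

Lemma piter_agree (f g : V -> V) v :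
  (forall x, f x = g x -> f (f x) = g (f x)) -> f v = g v ->
  forall n, piter f n v = piter g n v.
Proof.
  intros Hclosed Hv.
  assert (Hstep : forall n, f (piter f n v) = g (piter f n v)).
  { induction n as [|n IH]; [exact Hv|]. exact (Hclosed _ IH). }
  induction n as [|n IH]; [reflexivity|].
  change (f (piter f n v) = g (piter g n v)); now rewrite Hstep, IH.
Qed.

Lemma same_tree_sym (f : V -> V) u w : same_tree f u w -> same_tree f w u.
Proof. intros [m [n H]]; now exists n, m. Qed.

Lemma same_tree_trans (f : V -> V) x y z :
  same_tree f x y -> same_tree f y z -> same_tree f x z.
Proof.
  intros [a [b H1]] [c [d H2]]; exists (c + a), (b + d).
  rewrite piter_add, H1, <- piter_add, Nat.add_comm, piter_add, H2, <- piter_add.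
  reflexivity.
Qed.

Lemma nondegenerate_tree_has_nonroot (f : V -> V) u :
  in_nondegenerate_tree f u -> exists u0, ~ is_root f u0 /\ same_tree f u0 u.
Proof.
  intros [u' [Hne [a [b H]]]].
  destruct (classic (is_root f u')) as [Ru' | Nu'].
  - destruct (classic (is_root f u)) as [Ru | Nu].
    + rewrite (piter_root f a u' Ru'), (piter_root f b u Ru) in H; contradiction.
    + exists u; split; [exact Nu|]; now exists 0, 0.
  - exists u'; split; [exact Nu'|]; now exists a, b.
Qed.

End Iterates.

Lemma thinner_directed_forest (V : Type) (p r : V -> V) :
  directed_forest V p -> thinner r p -> directed_forest V r.
Proof.
  intros [Hinh Hp] Hrp; split; [exact Hinh|].
  intros n v Hcyc.
  destruct (classic (is_root r v)) as [Rv | Nv]; [exact Rv|].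
  assert (Ecyc : piter r (S n) v = piter p (S n) v)
    by (apply piter_thinner; [exact Hrp | now rewrite Hcyc]).
  rewrite Hcyc in Ecyc; symmetry in Ecyc.
  destruct (Hrp v) as [E | E]; [exact E|].
  rewrite E; exact (Hp n v Ecyc).
Qed.

Section Redirect.
Context {V : Type} (f : V -> V) (w y : V).

Definition redirect : V -> V :=
  fun x => if excluded_middle_informative (x = w) then y else f x.

Lemma redirect_at : redirect w = y.
Proof. unfold redirect; destruct (excluded_middle_informative (w = w)); congruence. Qed.

Lemma redirect_other x : x <> w -> redirect x = f x.
Proof. intro Hx; unfold redirect; destruct (excluded_middle_informative (x = w)); congruence. Qed.

Lemma thinner_redirect (p : V -> V) : thinner f p -> y = p w -> thinner redirect p.
Proof.
  intros Hfp Hy x; destruct (classic (x = w)) as [-> | Hx].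
  - right; now rewrite redirect_at.
  - rewrite (redirect_other x Hx); apply Hfp.
Qed.

Lemma leafless_redirect v :
  leafless f -> is_root f w -> f v = w -> v <> w -> leafless redirect.
Proof.
  intros Hf Rw Hv Hvw x; destruct (Hf x) as [u Hu].
  destruct (classic (u = w)) as [-> | Huw].
  - exists v; rewrite (redirect_other v Hvw); congruence.
  - exists u; now rewrite (redirect_other u Huw).
Qed.

End Redirect.

Section LeaflessSupport.
Variables (V : Type) (p q : V -> V).
Hypotheses (Hp : directed_forest V p) (Hq : leafless_support p q).

Lemma support_root_with_preimage w v :
  is_root q w -> q v = w -> v <> w -> is_root p w.
Proof.
  intros Rw Hv Hvw; destruct Hq as [_ [Hql [Hqp Hmax]]].
  set (r := redirect q w (p w)).
  assert (Hrp : thinner r p) by now apply thinner_redirect.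
  assert (Hrl : leafless r) by now apply (leafless_redirect q w (p w) v).
  destruct (Hmax r (thinner_directed_forest V p r Hp Hrp) Hrl Hrp w) as [E | E];
    unfold r in E; rewrite redirect_at in E; unfold is_root; congruence.
Qed.

Lemma support_succ v : ~ is_root q v -> q (q v) = p (q v).
Proof.
  intro Nv; destruct Hq as [_ [_ [Hqp _]]].
  destruct (Hqp (q v)) as [E | E]; [|exact E].
  rewrite E; symmetry; now apply (support_root_with_preimage (q v) v).
Qed.

Lemma support_piter v : ~ is_root q v -> forall n, piter q n v = piter p n v.
Proof.
  intro Nv; destruct Hq as [_ [_ [Hqp _]]].
  apply piter_agree.
  - intros x Ex; destruct (classic (is_root q x)) as [Rx | Nx].
    + unfold is_root in Rx; now rewrite Rx.
    + now apply support_succ.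
  - destruct (Hqp v); tauto.
Qed.

Lemma support_same_tree v1 v2 :
  ~ is_root q v1 -> ~ is_root q v2 -> same_tree p v1 v2 -> same_tree q v1 v2.
Proof.
  intros N1 N2 [m [n H]]; exists m, n.
  now rewrite (support_piter v1 N1), (support_piter v2 N2).
Qed.

End LeaflessSupport.

Theorem corollary4p6 (V : Type) (p q : V -> V)
  (HT : directed_forest V p) (Hq : leafless_support p q) :
  (forall v : V, ~ is_root q v -> forall n : nat, piter q n v = piter p n v)
  /\ (forall v1 v2 : V, ~ is_root q v1 -> ~ is_root q v2 ->
        same_tree p v1 v2 -> same_tree q v1 v2)
  /\ (directed_tree V p ->
        forall u w : V, in_nondegenerate_tree q u -> in_nondegenerate_tree q w ->
          same_tree q u w).
Proof.
  split; [exact (support_piter V p q HT Hq)|].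
  split; [exact (support_same_tree V p q HT Hq)|].
  intros [_ Hall] u w Hu Hw.
  destruct (nondegenerate_tree_has_nonroot q u Hu) as [u0 [Nu0 Hu0]].
  destruct (nondegenerate_tree_has_nonroot q w Hw) as [w0 [Nw0 Hw0]].
  apply same_tree_trans with u0; [now apply same_tree_sym|].
  apply same_tree_trans with w0; [|exact Hw0].
  exact (support_same_tree V p q HT Hq u0 w0 Nu0 Nw0 (Hall u0 w0)).
Qed.
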